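(* For each positive integer $n\ge 4$, there exists a pair of sidigraphs $S,S'$ of order $n$, both strongly connected and both non cycle balanced, which are noncospectral and satisfy $E(S)=E(S')$.
   Context: A sidigraph is a digraph (no loops, at most one arc from $u$ to $v$) with a sign $\pm1$ on each arc; its eigenvalues are those of its adjacency matrix, whose $(i,j)$ entry is the sign of the arc from $v_i$ to $v_j$ if it exists and $0$ otherwise; its spectrum is the multiset of eigenvalues, and two sidigraphs are cospectral if their spectra coincide. A sidigraph is strongly connected if its underlying digraph is. The sign of a directed cycle is the product of its arc signs; a sidigraph is cycle balanced if every directed cycle is positive, non cycle balanced otherwise. The energy of a sidigraph with eigenvalues $z_1,\dots,z_n$ is $E(S)=\sum_{j=1}^n|\Re z_j|$. *)

From HB Require Import structures.
From mathcomp Require Import all_boot all_order all_algebra all_field.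
Set Implicit Arguments. Unset Strict Implicit. Unset Printing Implicit Defensive.
Import Order.TTheory GRing.Theory Num.Theory.
Local Open Scope ring_scope.

(* A sidigraph on vertex set 'I_n is encoded by its (integer) adjacency
   matrix A : A i j = sign of the arc i -> j if it exists, 0 otherwise.
   Validity: no loops, entries in {-1, 0, 1}. *)
Definition is_sidigraph (n : nat) (A : 'M[int]_n) : Prop :=
  (forall i, A i i = 0) /\ (forall i j, A i j \in [:: -1; 0; 1]).

Definition arc (n : nat) (A : 'M[int]_n) : rel 'I_n := fun i j => A i j != 0.

Definition strongly_connected (n : nat) (A : 'M[int]_n) : Prop :=
  forall i j : 'I_n, connect (arc A) i j.

Definition directed_cycle (n : nat) (A : 'M[int]_n) (c : seq 'I_n) : bool :=
  [&& c != [::], uniq c & cycle (arc A) c].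

Definition cycle_sign (n : nat) (A : 'M[int]_n) (c : seq 'I_n) : int :=
  \prod_(p <- zip c (rot 1 c)) A p.1 p.2.

Definition cycle_balanced (n : nat) (A : 'M[int]_n) : Prop :=
  forall c, directed_cycle A c -> cycle_sign A c = 1.

Definition adjC (n : nat) (A : 'M[int]_n) : 'M[algC]_n := map_mx intr A.

(* spectrum: the multiset (as a seq, up to permutation) of the roots of the
   characteristic polynomial, i.e. eigenvalues with algebraic multiplicity *)
Definition spectrum (n : nat) (A : 'M[int]_n) : seq algC :=
  sval (closed_field_poly_normal (char_poly (adjC A))).

Definition cospectral (n : nat) (A B : 'M[int]_n) : Prop :=
  perm_eq (spectrum A) (spectrum B).

Definition energy (n : nat) (A : 'M[int]_n) : algC :=
  \sum_(z <- spectrum A) `|'Re z|.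

From Pilot Require Import Defs.
From HB Require Import structures.
From mathcomp Require Import all_boot all_order all_algebra all_field.
From mathcomp Require Import ring zify.
Set Implicit Arguments. Unset Strict Implicit. Unset Printing Implicit Defensive.
Import Order.TTheory GRing.Theory Num.Theory.
Local Open Scope ring_scope.

(* Take the complete bipartite digraph between the "hub" {0, ..., k-1} and the
   other vertices, with arcs out of the hub positive and arcs into it negative.
   Its adjacency matrix is skew-symmetric, so all eigenvalues are purely
   imaginary and its energy is 0, whatever k is.  A positive and a negative arc
   between two vertices form a negative 2-cycle.  The nonzero eigenvalues
   satisfy z^2 = -k(n-k), and -(n-1) <> -2(n-2) for n >= 4, so k = 1 and k = 2
   give noncospectral sidigraphs. *)

Lemma mem_spectrum n (A : 'M[int]_n) z : (z \in spectrum A) = eigenvalue (adjC A) z.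
Proof.
rewrite /spectrum; case: closed_field_poly_normal => r /= hr.
by rewrite eigenvalue_root_char hr (monicP (char_poly_monic _)) scale1r root_prod_XsubC.
Qed.

Lemma skew_hermitian_eigenvalue_Re n (A : 'M[algC]_n) :
  A^T = - map_mx Num.conj A -> forall z, eigenvalue A z -> 'Re z = 0.
Proof.
move=> skewA z /eigenvalueP[v vA nz_v].
pose w := map_mx Num.conj v.
have Aw : A *m w^T = - z^* *: w^T.
  rewrite -[A]trmxK -trmx_mul skewA mulmxN -map_mxM vA map_mxZ.
  by rewrite -scaleNr linearZ.
have normv : (v *m w^T) 0 0 = \sum_i `|v 0 i| ^+ 2.
  by rewrite !mxE; apply: eq_bigr => i _; rewrite !mxE normCK.
have nz_norm : (v *m w^T) 0 0 != 0.
  apply: contra nz_v; rewrite normv => /eqP/psumr_eq0P v0.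
  apply/eqP/rowP => i; rewrite mxE.
  by apply/eqP; rewrite -normr_eq0 -sqrf_eq0 v0 // => j _; rewrite exprn_ge0.
(* Evaluate v A v^* in two ways: it equals both z |v|^2 and -z^* |v|^2. *)
have := mulmxA v A w^T; rewrite vA Aw -scalemxAl -scalemxAr.
set P := v *m w^T => /(congr1 (fun B : 'M_1 => B 0 0)).
rewrite [LHS]mxE [RHS]mxE => E.
have : (z + z^*) * P 0 0 = 0 by rewrite mulrDl -E mulNr addNr.
move/eqP; rewrite mulf_eq0 (negbTE nz_norm) orbF => /eqP zz.
by rewrite ReE zz mul0r.
Qed.

Lemma energy_skew n (A : 'M[int]_n) : A^T = - A -> energy A = 0.
Proof.
move=> skewA; have skewAC : (adjC A)^T = - map_mx Num.conj (adjC A).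
  rewrite /adjC -map_mx_comp (@eq_map_mx _ _ _ _ intr) => [|x /=];
    last exact: conj_intr.
  by rewrite map_trmx skewA map_mxN.
rewrite /energy big1_seq // => z /andP[_]; rewrite mem_spectrum.
by move/(skew_hermitian_eigenvalue_Re skewAC) => ->; rewrite normr0.
Qed.

Lemma sum_ord_lt_const {R : nmodType} {n k : nat} (c : R) :
  (k <= n)%N -> \sum_(i < n | (i < k)%N) c = c *+ k.
Proof. by move=> kn; rewrite -(big_ord_widen _ (fun=> c) kn) sumr_const card_ord. Qed.

Lemma sum_ord_ge_const {R : zmodType} {n k : nat} (c : R) :
  (k <= n)%N -> \sum_(i < n | ~~ (i < k)%N) c = c *+ (n - k).
Proof.
move=> kn; have -> : c *+ (n - k) = \sum_(i < n) c - c *+ k.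
  by rewrite sumr_const card_ord mulrnBr.
by rewrite [in RHS](bigID (fun i : 'I_n => (i < k)%N)) /= sum_ord_lt_const // addrC addrK.
Qed.

Definition skew_biclique n k : 'M[int]_n :=
  \matrix_(i, j) ((i < k)%N%:R - (j < k)%N%:R).

Section SkewBiclique.

Variables n k : nat.
Local Notation M := (skew_biclique n k).

Lemma tr_skew_biclique : M^T = - M.
Proof. by apply/matrixP => i j; rewrite !mxE opprB. Qed.

Lemma sidigraph_skew_biclique : is_sidigraph M.
Proof.
split=> [i|i j]; rewrite mxE ?subrr //.
by case: (i < k)%N; case: (j < k)%N.
Qed.

Lemma arc_skew_biclique i j : Defs.arc M i j = ((i < k)%N != (j < k)%N).
Proof. by rewrite /Defs.arc mxE; case: (i < k)%N; case: (j < k)%N. Qed.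

Section RowVector.

Variable v : 'rV[algC]_n.
Let hub_sum := \sum_(i < n | (i < k)%N) v 0 i.
Let rim_sum := \sum_(i < n | ~~ (i < k)%N) v 0 i.

Lemma mul_skew_biclique j :
  (v *m adjC M) 0 j = if (j < k)%N then - rim_sum else hub_sum.
Proof.
rewrite mxE (bigID (fun i : 'I_n => (i < k)%N)) /=.
case: ifP => jk.
  rewrite big1 ?add0r => [|i ik]; last by rewrite !mxE ik jk subrr mulr0.
  by rewrite -sumrN; apply: eq_bigr => i /negbTE ik; rewrite !mxE ik jk mulrN1.
rewrite [X in _ + X]big1 ?addr0 => [|i /negbTE ik]; last by rewrite !mxE ik jk subrr mulr0.
by apply: eq_bigr => i ik; rewrite !mxE ik jk mulr1.
Qed.

End RowVector.

Lemma eigenvalue_skew_biclique z : (k <= n)%N ->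
  eigenvalue (adjC M) z -> z = 0 \/ z ^+ 2 = - (k * (n - k))%:R.
Proof.
move=> kn /eigenvalueP[v vM nz_v].
set s := \sum_(i < n | (i < k)%N) v 0 i; set t := \sum_(i < n | ~~ (i < k)%N) v 0 i.
have eq_j j : z * v 0 j = if (j < k)%N then - t else s.
  by rewrite -mul_skew_biclique vM mxE.
have zs : z * s = - t *+ k.
  rewrite mulr_sumr -(sum_ord_lt_const _ kn).
  by apply: eq_bigr => j jk; rewrite eq_j jk.
have zt : z * t = s *+ (n - k).
  rewrite mulr_sumr -(sum_ord_ge_const _ kn).
  by apply: eq_bigr => j /negbTE jk; rewrite eq_j jk.
have [->|nz_z] := eqVneq z 0; [by left | right].
have nz_s : s != 0.
  apply: contra nz_v => /eqP s0.
  have t0 : t = 0.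
    by move: zt; rewrite s0 mul0rn => /eqP; rewrite mulf_eq0 (negbTE nz_z) => /eqP.
  apply/eqP/rowP => j; apply: (mulfI nz_z).
  by rewrite eq_j s0 t0 oppr0 !mxE mulr0; case: ifP.
apply: (mulIf nz_s); rewrite -mulr_natr in zs zt.
rewrite expr2 -mulrA zs; transitivity (- (z * t) * k%:R); first by ring.
by rewrite zt natrM; ring.
Qed.

Hypotheses (k_gt0 : (0 < k)%N) (k_lt_n : (k < n)%N).

Let hub : 'I_n := Ordinal (ltn_trans k_gt0 k_lt_n).
Let rim : 'I_n := Ordinal k_lt_n.

Lemma skew_biclique_strongly_connected : strongly_connected M.
Proof.
have to_other_side i : exists2 m, Defs.arc M i m & (m < k)%N = ~~ (i < k)%N.
  by case: (ltnP i k) => ik; [exists rim | exists hub];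
    rewrite ?arc_skew_biclique /= ?ltnn ?k_gt0 ?ik // ltnNge ik.
move=> i j; have [m im m_side] := to_other_side i.
have [ij_side | ij_side] := eqVneq (i < k)%N (j < k)%N.
  apply: connect_trans (connect1 im) (connect1 _).
  by rewrite arc_skew_biclique m_side ij_side; case: (j < k)%N.
by apply: connect1; rewrite arc_skew_biclique.
Qed.

Lemma skew_biclique_not_cycle_balanced : ~ cycle_balanced M.
Proof.
have hub_neq_rim : hub != rim by rewrite -val_eqE /= neq_ltn k_gt0.
have cyc : directed_cycle M [:: hub; rim].
  by rewrite /directed_cycle /= inE hub_neq_rim !arc_skew_biclique /= ltnn k_gt0.
move=> /(_ _ cyc); rewrite /cycle_sign /= !big_cons big_nil !mxE /=.
by rewrite ltnn k_gt0.
Qed.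

Lemma skew_biclique_eigenvalue_sqrt :
  eigenvalue (adjC M) (sqrtC (- (k * (n - k))%:R)).
Proof.
set z := sqrtC _; have z2 : z ^+ 2 = - (k * (n - k))%:R := sqrtCK _.
have nz_k : (k%:R : algC) != 0 by rewrite pnatr_eq0 -lt0n.
pose v : 'rV[algC]_n := \row_j (if (j < k)%N then z / k%:R else 1).
have hub_sum : \sum_(i < n | (i < k)%N) v 0 i = z.
  rewrite (eq_bigr (fun=> z / k%:R)) => [|i ik]; last by rewrite mxE ik.
  by rewrite (sum_ord_lt_const _ (ltnW k_lt_n)) -(mulr_natr (z / k%:R)) divfK.
have rim_sum : \sum_(i < n | ~~ (i < k)%N) v 0 i = (n - k)%:R.
  rewrite (eq_bigr (fun=> 1)) => [|i /negbTE ik]; last by rewrite mxE ik.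
  exact: sum_ord_ge_const (ltnW k_lt_n).
apply/eigenvalueP; exists v.
  apply/rowP => j; rewrite mul_skew_biclique hub_sum rim_sum !mxE.
  case: ifP => _; last by rewrite mulr1.
  by rewrite mulrA -expr2 z2 natrM mulNr mulrAC divff ?mul1r.
by apply/eqP => /rowP/(_ rim)/eqP; rewrite !mxE ltnn oner_eq0.
Qed.

End SkewBiclique.

Theorem theorem4p1 (n : nat) (hn : (4 <= n)%N) :
  exists S S' : 'M[int]_n,
    is_sidigraph S /\ is_sidigraph S' /\
    strongly_connected S /\ strongly_connected S' /\
    ~ cycle_balanced S /\ ~ cycle_balanced S' /\
    ~ cospectral S S' /\ energy S = energy S'.
Proof.
have n_gt2 : (2 < n)%N by apply: leq_trans hn.
have n_gt1 : (1 < n)%N := ltnW n_gt2.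
exists (skew_biclique n 1), (skew_biclique n 2).
refine (conj _ (conj _ (conj _ (conj _ (conj _ (conj _ (conj _ _)))))));
  try exact: sidigraph_skew_biclique; try exact: skew_biclique_strongly_connected;
  try exact: skew_biclique_not_cycle_balanced.
2: by rewrite !energy_skew ?tr_skew_biclique.
move=> /perm_mem cospec.
have := skew_biclique_eigenvalue_sqrt (isT : (0 < 2)%N) n_gt2.
set z := sqrtC _ => eig2; have z2 : z ^+ 2 = - (2 * (n - 2))%:R := sqrtCK _.
have eig1 : eigenvalue (adjC (skew_biclique n 1)) z.
  by rewrite -mem_spectrum cospec mem_spectrum.
have [z0 | ] := eigenvalue_skew_biclique (ltnW n_gt1) eig1.
  by move: z2; rewrite z0 expr0n /= => /eqP; rewrite eq_sym oppr_eq0 pnatr_eq0; lia.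
by rewrite z2 => /oppr_inj/eqP; rewrite eqr_nat; lia.
Qed.
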